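(* For $i=1,\dots,q$ let $\lambda_i$ be a partition of $k_i$ and let $G_i$ be an $S_{\lambda_i}$-$k_i$-colourable graph. Let $\lambda=\bigcup_{i=1}^q\lambda_i$ be the multiset union and $k=k_1+\dots+k_q$. Then the join $\vee_{i=1}^qG_i$ is $S_\lambda$-$k$-colourable.
   Context: View a graph $G$ as a symmetric digraph: each edge $uv$ gives arcs $e=(u,v)$ and $e^{-1}=(v,u)$. For an inverse-closed set $S$ of permutations, an $S$-signature of $G$ is a map $\sigma$ from arcs to $S$ with $\sigma(e^{-1})=\sigma(e)^{-1}$. A $k$-colouring of $(G,\sigma)$ is a map $f:V(G)\to[k]$ with $\sigma(e)(f(x))\ne f(y)$ for every arc $e=(x,y)$; $G$ is $S$-$k$-colourable if $(G,\sigma)$ is $k$-colourable for every $S$-signature $\sigma$. For a partition $\lambda=\{k_1,\dots,k_q\}$ of $k$ (listed in a fixed order), let $s_0=0$, $s_j=s_{j-1}+k_j$, $I_j=\{s_{j-1}+1,\dots,s_j\}$, and let $S_\lambda$ be the set of permutations $\pi$ of $[k]$ with $\pi(I_j)=I_j$ for all $j$. The join $\vee_{i=1}^qG_i$ is the disjoint union of the $G_i$ plus all edges between $V(G_i)$ and $V(G_j)$ for $i\ne j$. *)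

From mathcomp Require Import all_boot all_fingroup.
Set Implicit Arguments. Unset Strict Implicit. Unset Printing Implicit Defensive.

(* A graph is a symmetric irreflexive relation E on a finite vertex type T.
   Each edge uv gives the two arcs (u,v) and (v,u); a signature assigns a
   permutation of the colour set 'I_k to every arc. *)

Definition is_signature (T : finType) (E : rel T) (k : nat)
    (S : pred {perm 'I_k}) (sigma : T -> T -> {perm 'I_k}) : Prop :=
  forall x y, E x y -> sigma x y \in S /\ sigma y x = (sigma x y)^-1%g.

Definition is_colouring (T : finType) (E : rel T) (k : nat)
    (sigma : T -> T -> {perm 'I_k}) (f : T -> 'I_k) : Prop :=
  forall x y, E x y -> sigma x y (f x) != f y.

Definition S_colourable (T : finType) (E : rel T) (k : nat)
    (S : pred {perm 'I_k}) : Prop :=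
  forall sigma, is_signature E S sigma -> exists f : T -> 'I_k, is_colouring E sigma f.

Definition is_partition (lam : seq nat) (k : nat) : bool :=
  all (fun p => 0 < p) lam && (sumn lam == k).

(* The block I_j (0-indexed, colours 0..k-1): s_{j} <= x < s_{j+1},
   where s_j = sum of the first j parts. *)
Definition block (lam : seq nat) (k : nat) (j : nat) : {set 'I_k} :=
  [set x : 'I_k | (sumn (take j lam) <= x) && (x < sumn (take j.+1 lam))].

Definition S_lambda (lam : seq nat) (k : nat) : pred {perm 'I_k} :=
  fun pi => [forall j : 'I_(size lam), pi @: block lam k j == block lam k j].

Definition join_rel (q : nat) (T : 'I_q -> finType) (E : forall i, rel (T i))
    : rel {i : 'I_q & T i} :=
  fun x y => if tag x == tag y then E (tag x) (tagged x) (tagged_as x y) else true.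

Arguments block lam k j : clear implicits.
Arguments S_lambda lam k : clear implicits.

From mathcomp Require Import all_boot all_fingroup.
From mathcomp Require Import zify.

Set Implicit Arguments.
Unset Strict Implicit.
Unset Printing Implicit Defensive.

(* Write lambda as the concatenation lambda_1 ... lambda_q.  The colours of
   G_i then form the interval [s_i, s_i + k_i), s_i = k_1 + ... + k_(i-1),
   which every permutation of S_lambda stabilises, acting there as a
   permutation of S_(lambda_i).  Hence a signature of the join restricts to an
   S_(lambda_i)-signature of each G_i; colouring every G_i inside its own
   interval colours the join, because an edge between G_i and G_j (i <> j)
   has its ends coloured in disjoint stable intervals.  Reordering the parts
   of lambda is handled by conjugating with a permutation of the colours that
   maps blocks onto blocks. *)

Definition psum (L : seq nat) (j : nat) : nat := sumn (take j L).

Lemma psum_mono L : {homo psum L : m n / m <= n}.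
Proof. by move=> m n mn; rewrite /psum -(subnKC mn) takeD sumn_cat leq_addr. Qed.

Lemma psum_oversize L j : size L <= j -> psum L j = sumn L.
Proof. by move=> h; rewrite /psum take_oversize. Qed.

Lemma psum_cat L1 M L2 j :
  j <= size M -> psum (L1 ++ M ++ L2) (size L1 + j) = sumn L1 + psum M j.
Proof.
by move=> jM; rewrite /psum take_cat ltnNge leq_addr addKn takel_cat // sumn_cat.
Qed.

Lemma psumS L j : j < size L -> psum L j.+1 = psum L j + nth 0 L j.
Proof. by move=> jL; rewrite /psum (take_nth 0 jL) -cats1 sumn_cat /= addn0. Qed.

Lemma psum_le_sumn L j : psum L j <= sumn L.
Proof. by rewrite /psum -{2}(cat_take_drop j L) sumn_cat leq_addr. Qed.

(* Equals [size L] for the colours [z >= sumn L], which lie in no block. *)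
Definition block_index (L : seq nat) (z : nat) : nat :=
  find (fun j => z < psum L j.+1) (iota 0 (size L)).

Lemma block_index_le L z : block_index L z <= size L.
Proof. by rewrite -[X in _ <= X](size_iota 0) find_size. Qed.

Lemma leq_psum_block_index L j z :
  j <= size L -> (psum L j <= z) = (j <= block_index L z).
Proof.
move=> jL; have bL := block_index_le L z.
have before i : i < block_index L z -> psum L i.+1 <= z.
  move=> ib; have := before_find 0 ib; rewrite nth_iota ?add0n; last lia.
  by move/negbT; rewrite -leqNgt.
case: (leqP j (block_index L z)) => [jb | bj].
  by case: j jL jb => [|j] _ jb; [rewrite /psum take0 | exact: before].
have hasb : has (fun j => z < psum L j.+1) (iota 0 (size L)).
  by rewrite has_find -/(block_index L z) size_iota; lia.
apply/negbTE; rewrite -ltnNge.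
apply: (@leq_trans (psum L (block_index L z).+1)); last exact: psum_mono.
by have := nth_find 0 hasb; rewrite -/(block_index L z) nth_iota ?add0n //; lia.
Qed.

Lemma block_index_lt L z : z < sumn L -> block_index L z < size L.
Proof.
move=> zL; rewrite ltnNge -leq_psum_block_index //.
by rewrite psum_oversize // -ltnNge.
Qed.

Lemma block_index_bounds L z :
  z < sumn L -> psum L (block_index L z) <= z < psum L (block_index L z).+1.
Proof.
move=> zL; have bL := block_index_lt zL.
by rewrite leq_psum_block_index ?(ltnW bL) // leqnn ltnNge leq_psum_block_index // ltnn.
Qed.

Lemma block_indexE L j z : psum L j <= z < psum L j.+1 -> block_index L z = j.
Proof.
case/andP=> lo hi.
have jL : j < size L.
  rewrite ltnNge; apply/negP => Lj.
  by move: lo hi; rewrite !psum_oversize ?(leqW Lj) //; lia.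
apply: anti_leq; rewrite -[j <= _]leq_psum_block_index ?lo ?andbT; last exact: ltnW.
by rewrite leqNgt -leq_psum_block_index // -ltnNge.
Qed.

Lemma mem_block L k j (x : 'I_k) :
  j < size L -> (x \in block L k j) = (block_index L x == j).
Proof.
move=> jL; rewrite inE -/(psum L j) -/(psum L j.+1) ltnNge.
rewrite !leq_psum_block_index ?(ltnW jL) //.
by rewrite eqn_leq andbC -ltnNge.
Qed.

Lemma S_lambdaP L k (p : {perm 'I_k}) :
  reflect (forall x, block_index L (p x) = block_index L x) (p \in S_lambda L k).
Proof.
apply: (iffP forallP) => [pS x | pS j].
  have pS_eq j : j < size L -> (block_index L (p x) == j) = (block_index L x == j).
    move=> jL; have /eqP Bj : p @: block L k j == block L k j := pS (Ordinal jL).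
    by rewrite -!mem_block // -{1}Bj (mem_imset _ _ perm_inj).
  have := block_index_le L x; have := block_index_le L (p x).
  case: (ltnP (block_index L x) (size L)) => [xL _ _ | Lx pxL xL].
    by apply/eqP; rewrite pS_eq.
  case: (ltnP (block_index L (p x)) (size L)) => [pxL' | ]; last by lia.
  by apply/eqP; rewrite eq_sym -pS_eq.
rewrite eqEcard (card_imset _ perm_inj) leqnn andbT.
by apply/subsetP => _ /imsetP[x xj ->]; rewrite mem_block // pS -mem_block.
Qed.

Lemma S_lambda_psumP L k (p : {perm 'I_k}) :
  reflect (forall j x, (psum L j <= p x) = (psum L j <= x)) (p \in S_lambda L k).
Proof.
apply: (iffP (@S_lambdaP L k p)) => [pS j x | pS x].
  case: (leqP j (size L)) => [jL | Lj].
    by rewrite !leq_psum_block_index // pS.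
  rewrite (psum_oversize (ltnW Lj)) -(psum_oversize (leqnn (size L))).
  by rewrite !leq_psum_block_index // pS.
have leq_block j : j <= size L -> (j <= block_index L (p x)) = (j <= block_index L x).
  by move=> jL; rewrite -!leq_psum_block_index.
apply: anti_leq; apply/andP; split; first by rewrite -leq_block ?block_index_le.
by rewrite leq_block ?block_index_le.
Qed.

Lemma S_colourable_conj (T : finType) (E : rel T) k (S1 S2 : pred {perm 'I_k})
    (phi : {perm 'I_k}) :
  (forall p, p \in S1 -> (p ^ phi)%g \in S2) ->
  S_colourable E S2 -> S_colourable E S1.
Proof.
move=> S12 col2 sigma sig1.
have [|f fcol] := col2 (fun x y => (sigma x y ^ phi)%g).
  move=> x y xy; have [Ssig sigV] := sig1 x y xy.
  by split; [exact: S12 | rewrite sigV conjVg].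
exists (fun x => phi^-1%g (f x)) => x y xy.
have := fcol x y xy; rewrite -{1}(permKV phi (f x)) permJ; apply: contra => /eqP->.
by rewrite permKV.
Qed.

Section ReorderParts.

Variables (lam L tau : seq nat).
Hypothesis tau_perm : perm_eq tau (iota 0 (size L)).
Hypothesis lam_tau : lam = [seq nth 0 L j | j <- tau].

Lemma sumn_reorder : sumn lam = sumn L.
Proof.
rewrite lam_tau -[in RHS](mkseq_nth 0 L).
by apply: perm_sumn; apply: perm_map.
Qed.

Let size_lam : size lam = size tau.
Proof. by rewrite lam_tau size_map. Qed.

Lemma nth_reorder j : j < size lam -> nth 0 lam j = nth 0 L (nth 0 tau j).
Proof. by move=> jl; rewrite lam_tau (nth_map 0) // -size_lam. Qed.

Lemma nth_tau_lt j : j < size lam -> nth 0 tau j < size L.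
Proof.
move=> jl; have : nth 0 tau j \in iota 0 (size L).
  by rewrite -(perm_mem tau_perm) mem_nth // -size_lam.
by rewrite mem_iota.
Qed.

(* Block [j] of [lam] is sent onto block [nth 0 tau j] of [L], keeping the
   position inside the block. *)
Definition reorder (z : nat) : nat :=
  psum L (nth 0 tau (block_index lam z)) + (z - psum lam (block_index lam z)).

Lemma reorder_bounds z (t := nth 0 tau (block_index lam z)) :
  z < sumn lam -> psum L t <= reorder z < psum L t.+1.
Proof.
move=> zl; have bl := block_index_lt zl; have := block_index_bounds zl.
rewrite /reorder -/t psumS // psumS ?nth_tau_lt // nth_reorder // -/t; lia.
Qed.

Lemma block_index_reorder z :
  z < sumn lam -> block_index L (reorder z) = nth 0 tau (block_index lam z).
Proof. by move=> zl; apply: block_indexE; exact: reorder_bounds. Qed.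

Lemma reorder_inj : {in [pred z | z < sumn lam] &, injective reorder}.
Proof.
move=> z1 z2 z1l z2l eq12.
have eqb : block_index lam z1 = block_index lam z2.
  have := block_index_reorder z1l; rewrite eq12 block_index_reorder // => /eqP.
  rewrite nth_uniq -?size_lam ?block_index_lt ?(perm_uniq tau_perm) ?iota_uniq //.
  by move/eqP.
move: eq12; rewrite /reorder eqb.
have := block_index_bounds z1l; have := block_index_bounds z2l; rewrite eqb; lia.
Qed.

Lemma reorder_lt z : z < sumn L -> reorder z < sumn L.
Proof.
rewrite -sumn_reorder => zl; have /andP[_ ub] := reorder_bounds zl.
by rewrite sumn_reorder; apply: leq_trans ub (psum_le_sumn _ _).
Qed.

Definition reorder_ord (z : 'I_(sumn L)) : 'I_(sumn L) :=
  Ordinal (reorder_lt (ltn_ord z)).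

Lemma reorder_ord_inj : injective reorder_ord.
Proof.
move=> z1 z2 /(congr1 val)/= eq12; apply: val_inj.
by apply: reorder_inj eq12; rewrite inE sumn_reorder.
Qed.

Definition reorder_perm : {perm 'I_(sumn L)} := perm reorder_ord_inj.

Lemma S_lambda_reorder p :
  p \in S_lambda lam (sumn L) -> (p ^ reorder_perm)%g \in S_lambda L (sumn L).
Proof.
move/S_lambdaP => pS; apply/S_lambdaP => y.
rewrite -[y](permKV reorder_perm) permJ !permE /=.
by rewrite !block_index_reorder ?pS // sumn_reorder.
Qed.

End ReorderParts.

Lemma S_colourable_perm_parts (T : finType) (E : rel T) (lam L : seq nat) :
  perm_eq lam L ->
  S_colourable E (S_lambda L (sumn L)) -> S_colourable E (S_lambda lam (sumn L)).
Proof.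
case/(perm_iotaP 0) => tau tau_perm lam_tau.
by apply: S_colourable_conj => p; apply: (S_lambda_reorder tau_perm lam_tau).
Qed.

Definition stable_interval k (p : {perm 'I_k}) s m :=
  forall x : 'I_k, (s <= p x < s + m) = (s <= x < s + m).

Lemma stable_intervalV k (p : {perm 'I_k}) s m :
  stable_interval p s m -> stable_interval p^-1 s m.
Proof. by move=> pst x; rewrite -pst permKV. Qed.

Lemma insubd_permE (T : finType) (f : {ffun T -> T}) :
  injective f -> insubd (1%g : {perm T}) f =1 f.
Proof. by move=> finj x; rewrite -pvalE val_insubd ifT //; apply/injectiveP. Qed.

(* The restriction of [p] to the colours [s, s + m), shifted down to ['I_m];
   meaningful only when [p] stabilises that interval. *)
Definition perm_restr k (p : {perm 'I_k}) s m : {perm 'I_m} :=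
  insubd (1%g : {perm 'I_m}) [ffun a : 'I_m =>
    oapp (fun x : 'I_k => insubd a (val (p x) - s)) a (insub (s + a)) : 'I_m].

Section Restriction.

Variables (k s m : nat).
Hypothesis smk : s + m <= k.

Lemma perm_restrE (p : {perm 'I_k}) : stable_interval p s m ->
  forall (a : 'I_m) (x : 'I_k), val x = s + a -> s + perm_restr p s m a = p x.
Proof.
move=> pst; rewrite /perm_restr; set f := (X in insubd _ X).
have fE (a : 'I_m) (x : 'I_k) : val x = s + a -> s + f a = p x.
  move=> xa; rewrite ffunE -xa valK val_insubd.
  have := pst x; rewrite xa leq_addr /= ltn_add2l ltn_ord => /andP[lo hi].
  by rewrite ifT; lia.
have ord_of (a : 'I_m) : s + a < k by have := ltn_ord a; lia.
have finj : injective f.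
  move=> a1 a2 f12; apply: val_inj; apply/(@addnI s).
  have := fE a1 (Ordinal (ord_of a1)) erefl.
  have := fE a2 (Ordinal (ord_of a2)) erefl.
  by rewrite f12 => -> /val_inj eq12; have /(congr1 val)/= -> := perm_inj eq12.
by move=> a x xa; rewrite insubd_permE // (fE a x xa).
Qed.

Lemma perm_restrV (p : {perm 'I_k}) :
  stable_interval p s m -> perm_restr p^-1 s m = (perm_restr p s m)^-1%g.
Proof.
move=> pst; apply/eqP; rewrite eq_sym eq_invg_mul; apply/eqP/permP => a.
rewrite permM perm1; apply: val_inj; apply/(@addnI s).
have ord_of (b : 'I_m) : s + b < k by have := ltn_ord b; lia.
set b := perm_restr p s m a.
have pb : Ordinal (ord_of b) = p (Ordinal (ord_of a)).
  by apply: val_inj; rewrite /= (perm_restrE pst (x := Ordinal (ord_of a))).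
by rewrite (perm_restrE (stable_intervalV pst) (x := Ordinal (ord_of b))) // pb permK.
Qed.

End Restriction.

Lemma S_lambda_cat_stable L1 M L2 k (p : {perm 'I_k}) :
  p \in S_lambda (L1 ++ M ++ L2) k -> stable_interval p (sumn L1) (sumn M).
Proof.
move/S_lambda_psumP => Hp x.
have lo := Hp (size L1) x; have hi := Hp (size L1 + size M) x.
rewrite /psum take_size_cat // in lo.
rewrite psum_cat // psum_oversize // in hi.
by rewrite ltnNge hi ltnNge lo.
Qed.

Lemma S_lambda_restr L1 M L2 k m (p : {perm 'I_k}) :
  p \in S_lambda (L1 ++ M ++ L2) k -> sumn M = m -> sumn L1 + m <= k ->
  perm_restr p (sumn L1) m \in S_lambda M m.
Proof.
move=> pL Mm smk; apply/S_lambda_psumP => j a.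
case: (leqP j (size M)) => [jM | Mj]; last first.
  by rewrite (psum_oversize (ltnW Mj)) Mm leqNgt ltn_ord leqNgt ltn_ord.
have ord_a : sumn L1 + a < k by have := ltn_ord a; lia.
have pst : stable_interval p (sumn L1) m.
  by rewrite -Mm; exact: S_lambda_cat_stable pL.
move/S_lambda_psumP/(_ (size L1 + j) (Ordinal ord_a)): pL.
rewrite psum_cat // -(perm_restrE smk pst (a := a) (x := Ordinal ord_a)) //=.
by rewrite !leq_add2l.
Qed.

Lemma join_rel_tagged q (T : 'I_q -> finType) (E : forall i, rel (T i))
    i (u v : T i) :
  join_rel E (Tagged T u) (Tagged T v) = E i u v.
Proof. by rewrite /join_rel /= eqxx tagged_asE. Qed.

Section Join.

Variables (q : nat) (T : 'I_q -> finType) (E : forall i, rel (T i)).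
Arguments E : clear implicits.
Variables (ks : 'I_q -> nat) (lams : 'I_q -> seq nat).
Hypothesis sumn_lams : forall i, sumn (lams i) = ks i.
Hypothesis lams_colourable : forall i, S_colourable (E i) (S_lambda (lams i) (ks i)).

Let LL := [seq lams i | i <- enum 'I_q].
Let K := [seq ks i | i <- enum 'I_q].
Let L := flatten LL.
Let offset (i : 'I_q) := psum K i.

Let size_LL : size LL = q.
Proof. by rewrite size_map size_enum_ord. Qed.

Let nth_LL (i : 'I_q) : nth [::] LL i = lams i.
Proof. by rewrite (nth_map i) ?nth_ord_enum // size_enum_ord. Qed.

Let map_sumn_LL : map sumn LL = K.
Proof. by rewrite -map_comp; apply: eq_map => i; exact: sumn_lams. Qed.

Let sumn_L : sumn L = sumn K.
Proof. by rewrite sumn_flatten map_sumn_LL. Qed.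

Let split_L (i : 'I_q) : L = flatten (take i LL) ++ lams i ++ flatten (drop i.+1 LL).
Proof.
rewrite /L -{1}(cat_take_drop i LL) (drop_nth [::]) ?size_LL //.
by rewrite flatten_cat /= nth_LL.
Qed.

Let sumn_prefix (i : 'I_q) : sumn (flatten (take i LL)) = offset i.
Proof. by rewrite sumn_flatten map_take map_sumn_LL. Qed.

Let offset_next (i : 'I_q) : offset i + ks i = psum K i.+1.
Proof.
rewrite /offset psumS; last by rewrite size_map size_enum_ord.
by rewrite /K (nth_map i) ?nth_ord_enum ?size_enum_ord.
Qed.

Let offset_le (i j : 'I_q) : i < j -> offset i + ks i <= offset j.
Proof. by move=> ij; rewrite offset_next; exact: psum_mono. Qed.

Let offset_bound (i : 'I_q) : offset i + ks i <= sumn L.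
Proof. by rewrite offset_next sumn_L psum_le_sumn. Qed.

Let S_lambda_split (p : {perm 'I_(sumn L)}) (i : 'I_q) :
  p \in S_lambda L (sumn L) ->
  p \in S_lambda (flatten (take i LL) ++ lams i ++ flatten (drop i.+1 LL)) (sumn L).
Proof. by rewrite -split_L. Qed.

Let offset_stable (p : {perm 'I_(sumn L)}) (i : 'I_q) :
  p \in S_lambda L (sumn L) -> stable_interval p (offset i) (ks i).
Proof.
by move/(S_lambda_split i)/S_lambda_cat_stable; rewrite sumn_prefix sumn_lams.
Qed.

Section Signature.

Variable sigma : {i : 'I_q & T i} -> {i : 'I_q & T i} -> {perm 'I_(sumn L)}.
Hypothesis sigma_sig : is_signature (join_rel E) (S_lambda L (sumn L)) sigma.

Let sigma_at (i : 'I_q) (u v : T i) : {perm 'I_(ks i)} :=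
  perm_restr (sigma (Tagged T u) (Tagged T v)) (offset i) (ks i).

Let sigma_tagged i (u v : T i) : E i u v ->
  sigma (Tagged T u) (Tagged T v) \in S_lambda L (sumn L) /\
  sigma (Tagged T v) (Tagged T u) = (sigma (Tagged T u) (Tagged T v))^-1%g.
Proof. by move=> uv; apply: sigma_sig; rewrite join_rel_tagged. Qed.

Let sigma_atE i (u v : T i) : E i u v ->
  forall (a : 'I_(ks i)) (x : 'I_(sumn L)), val x = offset i + a ->
  offset i + sigma_at u v a = sigma (Tagged T u) (Tagged T v) x.
Proof.
move=> uv a x xa; have [sigmaL _] := sigma_tagged uv.
by rewrite /sigma_at (perm_restrE (offset_bound i) (offset_stable i sigmaL) xa).
Qed.

Let sigma_at_signature i :
  is_signature (E i) (S_lambda (lams i) (ks i)) (@sigma_at i).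
Proof.
move=> u v uv; have [sigmaL sigmaV] := sigma_tagged uv; split.
  rewrite /sigma_at -sumn_prefix.
  apply: (S_lambda_restr (S_lambda_split i sigmaL) (sumn_lams i)).
  by rewrite sumn_prefix offset_bound.
by rewrite /sigma_at sigmaV (perm_restrV (offset_bound i) (offset_stable i sigmaL)).
Qed.

Lemma join_colouring :
  exists f : {i : 'I_q & T i} -> 'I_(sumn L), is_colouring (join_rel E) sigma f.
Proof.
have [F Fcol] := @fin_all_exists _ (fun i => T i -> 'I_(ks i))
  (fun i f => is_colouring (E i) (@sigma_at i) f)
  (fun i => lams_colourable (@sigma_at_signature i)).
have colour_lt (x : {i : 'I_q & T i}) :
    offset (tag x) + F (tag x) (tagged x) < sumn L.
  by have := offset_bound (tag x); have := ltn_ord (F (tag x) (tagged x)); lia.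
exists (fun x => Ordinal (colour_lt x)) => -[i u] [j v].
case: (eqVneq i j) => [eq_ij | ij].
  subst j.
  rewrite join_rel_tagged => uv; apply: contra (Fcol i u v uv) => /eqP e.
  apply/eqP/val_inj/(@addnI (offset i)).
  by rewrite (sigma_atE uv (x := Ordinal (colour_lt (Tagged T u)))) // e.
move=> uv; apply/negP => /eqP e.
have := offset_stable i (sigma_sig uv).1 (Ordinal (colour_lt (Tagged T u))).
rewrite e /= leq_addr ltn_add2l ltn_ord.
have := ltn_ord (F j v); have := ltn_ord (F i u).
case: (ltngtP i j) => [lt_ij | lt_ji | /val_inj eq_ij]; last by rewrite eq_ij eqxx in ij.
  by have := offset_le lt_ij; lia.
by have := offset_le lt_ji; lia.
Qed.

End Signature.

Lemma join_colourable : S_colourable (join_rel E) (S_lambda L (sumn L)).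
Proof. by move=> sigma; exact: join_colouring. Qed.

End Join.

Theorem lemma16 (q : nat) (T : 'I_q -> finType) (E : forall i, rel (T i))
    (ks : 'I_q -> nat) (lams : 'I_q -> seq nat)
    (Esym : forall i, symmetric (E i)) (Eirr : forall i, irreflexive (E i))
    (Hpart : forall i, is_partition (lams i) (ks i))
    (Hcol : forall i, S_colourable (E i) (S_lambda (lams i) (ks i)))
    (lam : seq nat)
    (Hlam : perm_eq lam (flatten [seq lams i | i <- enum 'I_q])) :
  S_colourable (join_rel E) (S_lambda lam (\sum_(i < q) ks i)).
Proof.
have sumn_lams i : sumn (lams i) = ks i by case/andP: (Hpart i) => _ /eqP.
have -> : \sum_(i < q) ks i = sumn (flatten [seq lams i | i <- enum 'I_q]).
  by rewrite sumn_flatten -map_comp (eq_map sumn_lams) sumnE big_map big_enum.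
exact: S_colourable_perm_parts Hlam (join_colourable sumn_lams Hcol).
Qed.
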